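(* Let $n$ be a power of two and let $\mathcal{C}'$ be as in the context (for any fixed $s_0,s_1,s_2$). Then there exists a code $\mathcal{C}\subseteq\mathcal{C}'$ with $|\mathcal{C}|\ge |\mathcal{C}'|/m^{10}$ such that for any $x,x'\in\mathcal{C}$, either $H_x=H_{x'}$ or $|H_x\triangle H_{x'}|\ge 10$.
   Context: Logarithms are base $2$. Set $\Delta=50+1000\log n$ and $m=1000\Delta^2$. For $x\in\{0,1\}^n$ ending in $0011$, the marker segmentation is $x=z^x_1\|\cdots\|z^x_{\ell_x}$ where each $z^x_j$ ends with $0011$ and contains exactly one occurrence of $0011$. Let $h:\{0,1\}^{\le 3\Delta}\to\{0,\dots,m-1\}$ be a fixed function such that $h(z)\ne h(z')$ whenever $z'\ne z$ is obtained from $z$ by at most two adjacent transpositions, at most two substitutions, or at most one deletion and one insertion. Define $f(x)=\sum_{j=1}^{\ell_x} j(|z^x_j|\cdot m+h(z^x_j)) \bmod (10n\Delta m+1)$, $g_1(x)=\ell_x \bmod 5$, $g_2(x)=\sum_{i=1}^n\overline{x}_i \bmod 3$ with $\overline{x}_i=\sum_{j\le i}x_j \bmod 2$, and $\mathcal{C}'=\{x\in\{0,1\}^n:(x_{n-3},\dots,x_n)=(0,0,1,1), f(x)=s_0, g_1(x)=s_1, g_2(x)=s_2, |z^x_j|\le\Delta\ \forall j\}$. The hash multiset is $H_x=\{\{h(z^x_1),\dots,h(z^x_{\ell_x})\}\}$, and for multisets $|S\triangle T|=\sum_v|\mathrm{mult}_S(v)-\mathrm{mult}_T(v)|$. *)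

From mathcomp Require Import all_boot.
Set Implicit Arguments. Unset Strict Implicit. Unset Printing Implicit Defensive.

Definition marker : seq bool := [:: false; false; true; true].

Definition ends_marker (c : seq bool) : bool :=
  (3 < size c) && (drop (size c - 4) c == marker).

(* Marker segmentation: cut right after each occurrence of 0011
   (0011 cannot overlap itself, so this is the unique segmentation into
   pieces ending with 0011 and containing exactly one occurrence of it,
   whenever x ends with 0011). *)
Fixpoint seg_aux (cur s : seq bool) : seq (seq bool) :=
  match s with
  | [::] => if cur is [::] then [::] else [:: cur]
  | b :: s' => let c := rcons cur b in
               if ends_marker c then c :: seg_aux [::] s' else seg_aux c s'
  end.

Definition segs (x : seq bool) : seq (seq bool) := seg_aux [::] x.

(* log base 2 of n (exact when n is a power of two). *)
Definition Delta (n : nat) : nat := 50 + 1000 * trunc_log 2 n.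
Definition mm (n : nat) : nat := 1000 * (Delta n) ^ 2.

Definition adj_transp (z z' : seq bool) : Prop :=
  exists a b c d, z = a ++ [:: b; c] ++ d /\ z' = a ++ [:: c; b] ++ d.
Definition subst1 (z z' : seq bool) : Prop :=
  exists a b b' d, z = a ++ b :: d /\ z' = a ++ b' :: d.
Definition del1 (z z' : seq bool) : Prop :=
  exists a b d, z = a ++ b :: d /\ z' = a ++ d.
Definition ins1 (z z' : seq bool) : Prop := del1 z' z.

Definition le2 (R : seq bool -> seq bool -> Prop) (z z' : seq bool) : Prop :=
  z' = z \/ R z z' \/ exists y, R z y /\ R y z'.

Definition del_ins (z z' : seq bool) : Prop :=
  exists y, (y = z \/ del1 z y) /\ (z' = y \/ ins1 y z').

Definition close_edit (z z' : seq bool) : Prop :=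
  le2 adj_transp z z' \/ le2 subst1 z z' \/ del_ins z z'.

Definition good_hash (n : nat) (h : seq bool -> nat) : Prop :=
  (forall z, size z <= 3 * Delta n -> h z < mm n) /\
  (forall z z', size z <= 3 * Delta n -> size z' <= 3 * Delta n ->
     z' <> z -> close_edit z z' -> h z <> h z').

Definition f_val (n : nat) (h : seq bool -> nat) (x : seq bool) : nat :=
  (\sum_(j < size (segs x))
     j.+1 * (size (nth [::] (segs x) j) * mm n + h (nth [::] (segs x) j)))
  %% (10 * n * Delta n * mm n + 1).

Definition g1 (x : seq bool) : nat := size (segs x) %% 5.

Definition g2 (x : seq bool) : nat :=
  (\sum_(i < size x) ((\sum_(j < i.+1) nth false x j) %% 2)) %% 3.

Definition Cprime (n : nat) (h : seq bool -> nat) (s0 s1 s2 : nat)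
  : {set n.-tuple bool} :=
  [set x : n.-tuple bool |
     [&& drop (n - 4) x == marker, 3 < n,
         f_val n h x == s0, g1 x == s1, g2 x == s2 &
         all (fun z => size z <= Delta n) (segs x)]].

(* hash multiset H_x, represented as a sequence up to permutation *)
Definition Hms (h : seq bool -> nat) (x : seq bool) : seq nat := map h (segs x).

(* |S triangle T| = sum_v |mult_S v - mult_T v| *)
Definition msdist (s t : seq nat) : nat :=
  \sum_(v <- undup (s ++ t)) ((count_mem v s - count_mem v t) + (count_mem v t - count_mem v s)).

From mathcomp Require Import all_boot all_algebra all_field zify.
Set Implicit Arguments. Unset Strict Implicit. Unset Printing Implicit Defensive.
Import GRing.Theory.

(** Send the hash values injectively into a finite field [F] of characteristic
    11 with [m < #|F| <= 11 m], and attach to each [x] the syndrome made of the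
    power sums [sum_j phi(h(z_j))^i], [i < 9], of [H_x]. There are
    [#|F|^9 <= m^10] syndromes, so some syndrome class [C] has
    [|C| >= |C'| / m^10]. If two multisets have the same syndrome but
    [|H_x triangle H_x'| <= 9], their difference is a signed measure on at most
    nine points with nine vanishing moments; integrating the polynomial that
    vanishes at all but one of these points isolates the weight of that point,
    a multiplicity difference of absolute value at most 9, hence nonzero
    mod 11. About [n] only [3 < n], forced by membership in [C'], is used. *)

Local Open Scope ring_scope.

Lemma sum_seq_count (V : nmodType) (I : eqType) (g : I -> V) (A U : seq I) :
  uniq U -> {subset A <= U} ->
  \sum_(a <- A) g a = \sum_(v <- U) g v *+ count_mem v A.
Proof.
move=> uU; elim: A => [|a A IH] AU.
  by rewrite big_nil big1.
have aU : a \in U by apply: AU; rewrite mem_head.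
rewrite big_cons IH => [|x xA]; last by apply: AU; rewrite inE xA orbT.
under [RHS]eq_bigr do rewrite /= mulrnDr.
rewrite big_split /=; congr (_ + _).
rewrite (bigD1_seq a) //= eqxx big1 ?addr0 // => v /negbTE.
by rewrite eq_sym => ->.
Qed.

Lemma sparse_moments_eq0 (R : idomainType) (I : eqType) (phi D : I -> R)
    (U : seq I) (d : nat) :
  uniq U -> {in U &, injective phi} ->
  (count (fun v => D v != 0%R) U <= d)%N ->
  (forall i, (i < d)%N -> \sum_(v <- U) D v * phi v ^+ i = 0) ->
  {in U, forall v, D v = 0}.
Proof.
move=> uU phiI sparse moments v0 v0U; apply/eqP/negPn/negP => Dv0.
set S := [seq v <- U | D v != 0].
have uS : uniq S by apply: filter_uniq.
have v0S : v0 \in S by rewrite mem_filter Dv0.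
set r := \prod_(a <- [seq phi w | w <- rem v0 S]) ('X - a%:P).
have size_r : (size r <= d)%N.
  have S_gt0 : (0 < size S)%N by case: (S) v0S.
  by rewrite size_prod_XsubC size_map size_rem // prednK // size_filter.
have root_r v : v \in U -> v != v0 -> D v * r.[phi v] = 0.
  move=> vU vv0; have [-> | Dv] := eqVneq (D v) 0; first by rewrite mul0r.
  have /rootP -> : root r (phi v).
    by rewrite root_prod_XsubC map_f // mem_rem_uniq // inE vv0 mem_filter Dv.
  by rewrite mulr0.
have r_v0 : r.[phi v0] != 0.
  rewrite -rootE root_prod_XsubC; apply/mapP => -[w].
  rewrite mem_rem_uniq // inE mem_filter => /and3P[wv0 _ wU] /phiI E.
  by rewrite E ?eqxx in wv0.
have : \sum_(v <- U) D v * r.[phi v] = 0.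
  under eq_bigr do rewrite (horner_coef_wide _ size_r) mulr_sumr.
  rewrite exchange_big big1 //= => i _.
  by under eq_bigr do rewrite mulrCA; rewrite -mulr_sumr moments ?mulr0.
rewrite (bigD1_seq v0) //= big1_seq => [|v /andP[vv0 vU]]; last exact: root_r.
by rewrite addr0 => /eqP; rewrite mulf_eq0 (negbTE Dv0) (negbTE r_v0).
Qed.

Lemma pchar_natr_inj (R : nzRingType) (p m n : nat) :
  p \in [pchar R] -> (m - n + (n - m) < p)%N -> m%:R = n%:R :> R -> m = n.
Proof.
move=> charRp; wlog le_mn : m n / (m <= n)%N => [wlog_mn|].
  case/orP: (leq_total m n) => /wlog_mn // le_nm lt_p /esym E.
  by apply/esym/le_nm; rewrite // addnC.
move=> lt_p /eqP; rewrite eq_sym -subr_eq0 -natrB // -(dvdn_pcharf charRp).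
by move/dvdn_leq; lia.
Qed.

Lemma perm_eq_of_power_sums (F : fieldType) (p : nat) (phi : nat -> F)
    (d : nat) (A B : seq nat) :
  p \in [pchar F] -> (d < p)%N -> {in A ++ B &, injective phi} ->
  (forall i, (i < d)%N -> \sum_(a <- A) phi a ^+ i = \sum_(b <- B) phi b ^+ i) ->
  perm_eq A B \/ (d < msdist A B)%N.
Proof.
move=> charFp lt_dp phiI sums.
have [|le_d] := ltnP d (msdist A B); [by right | left].
set U := undup (A ++ B).
have [uU AU BU] : [/\ uniq U, {subset A <= U} & {subset B <= U}].
  by split=> [|v vA|v vB]; rewrite ?undup_uniq // mem_undup mem_cat ?vA ?vB ?orbT.
pose cA v := count_mem v A; pose cB v := count_mem v B.
pose D v : F := (cA v)%:R - (cB v)%:R.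
have dist_le v : v \in U -> (cA v - cB v + (cB v - cA v) <= msdist A B)%N.
  by move=> vU; rewrite /msdist (bigD1_seq v) //= leq_addr.
have D0 : {in U, forall v, D v = 0}.
  apply: (sparse_moments_eq0 (phi := phi) (d := d)) => // [u v uAB vAB||i lt_id].
  - by apply: phiI; rewrite -mem_undup.
  - apply: leq_trans le_d; rewrite -sum1_count big_mkcond /=.
    apply: leq_sum => v _; have [Dv|] := boolP (D v != 0); last by [].
    have : cA v != cB v by apply: contra Dv => /eqP E; rewrite /D E subrr.
    by rewrite /cA /cB; lia.
  - under eq_bigr do rewrite mulrBl !mulr_natl.
    by rewrite sumrB -!sum_seq_count ?sums ?subrr.
apply/allP => v vAB; have vU : v \in U by rewrite mem_undup.
apply/eqP/(pchar_natr_inj charFp); last exact/subr0_eq/D0.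
by have := dist_le v vU; rewrite /cA /cB; lia.
Qed.

Local Close Scope ring_scope.

Lemma exists_large_fiber (T K : finType) (f : T -> K) (A : {set T}) (k0 : K) :
  exists k, #|A| <= #|[set x in A | f x == k]| * #|K|.
Proof.
pose fiber k := [set x in A | f x == k].
have [k _ kmax] := @arg_maxnP _ k0 predT (fun k => #|fiber k|) isT.
exists k; have -> : #|A| = \sum_k' #|fiber k'|.
  rewrite -sum1_card (partition_big f predT) //=; apply: eq_bigr => k' _.
  by rewrite -sum1_card; apply: eq_bigl => x; rewrite inE.
by rewrite mulnC -sum_nat_const; apply: leq_sum => k' _; apply: kmax.
Qed.

Lemma pchar_field_above (p d M : nat) : prime p -> p ^ d <= M ->
  exists2 F : finFieldType, p \in [pchar F]%R & M < #|F| /\ #|F| ^ d <= M ^ d.+1.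
Proof.
move=> pr_p pd_le_M; have lt1p := prime_gt1 pr_p.
have M_gt0 : 0 < M by apply: leq_trans pd_le_M; rewrite expn_gt0 ltnW.
have [F charF cardF] := pPrimePowerField pr_p (ltn0Sn (trunc_log p M)).
exists F => //; rewrite cardF; split; first exact: trunc_log_ltn.
have le_F_pM : p ^ (trunc_log p M).+1 <= p * M.
  by rewrite expnS leq_mul2l trunc_logP ?orbT.
have [->|d_gt0] := posnP d; first by rewrite expn1.
apply: leq_trans (_ : (p * M) ^ d <= _); first by rewrite leq_exp2r.
by rewrite expnMn expnSr mulnC leq_mul2l pd_le_M orbT.
Qed.

Lemma nth_enum_inj (T : finType) (x0 : T) :
  {in [pred i | i < #|T|] &, injective (nth x0 (enum T))}.
Proof.
move=> i j i_lt j_lt /eqP; rewrite nth_uniq ?enum_uniq -?cardE //.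
exact: eqP.
Qed.

Lemma Cprime_gt3 n h s0 s1 s2 x : x \in Cprime n h s0 s1 s2 -> 3 < n.
Proof. by rewrite inE => /and3P[]. Qed.

Lemma Hms_lt_mm n h s0 s1 s2 x :
  good_hash n h -> x \in Cprime n h s0 s1 s2 -> all (fun a => a < mm n) (Hms h x).
Proof.
move=> [h_lt _]; rewrite inE => /and5P[_ _ _ _ /andP[_ /allP small]].
rewrite all_map; apply/allP => z /small le_z /=; apply: h_lt.
by apply: leq_trans le_z _; rewrite leq_pmull.
Qed.

Lemma expn11_9_le_mm n : 3 < n -> 11 ^ 9 <= mm n.
Proof.
move=> n_gt3; have lg : 2 <= trunc_log 2 n by apply: trunc_log_max.
apply: leq_trans (_ : 1000 * 2050 ^ 2 <= _); first by rewrite !expnS expn0; lia.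
by rewrite /mm leq_mul2l leq_exp2r //= /Delta; lia.
Qed.

Theorem lemma8 (n k : nat) (hn : n = 2 ^ k) (h : seq bool -> nat)
  (hh : good_hash n h) (s0 s1 s2 : nat) :
  exists C : {set n.-tuple bool},
    C \subset Cprime n h s0 s1 s2 /\
    #|Cprime n h s0 s1 s2| <= #|C| * mm n ^ 10 /\
    (forall x x' : n.-tuple bool, x \in C -> x' \in C ->
       perm_eq (Hms h x) (Hms h x') \/ 10 <= msdist (Hms h x) (Hms h x')).
Proof.
set C' := Cprime n h s0 s1 s2.
have [/eqP C'0 | /set0Pn [x0 x0C']] := boolP (C' == set0).
  by exists set0; rewrite C'0 sub0set cards0; split=> //; split=> // x; rewrite inE.
have [F charF [mm_lt_F F_le_mm]] :=
  pchar_field_above (isT : prime 11) (expn11_9_le_mm (Cprime_gt3 x0C')).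
pose phi := nth 0%R (enum F).
pose syndrome (x : n.-tuple bool) : {ffun 'I_9 -> F} :=
  [ffun i : 'I_9 => (\sum_(a <- Hms h x) phi a ^+ i)%R].
have [s large] := exists_large_fiber syndrome C' [ffun=> 0%R].
exists [set x in C' | syndrome x == s]; split.
  by apply/subsetP => x /setIdP[].
split.
  apply: leq_trans large _.
  by rewrite card_ffun card_ord leq_mul2l F_le_mm orbT.
move=> x x' /setIdP[xC' /eqP sx] /setIdP[x'C' /eqP sx'].
have small : all (fun a => a < #|F|) (Hms h x ++ Hms h x').
  have lt_F a : a < mm n -> a < #|F| by move/ltn_trans; apply.
  by rewrite all_cat (sub_all lt_F (Hms_lt_mm hh xC'))
             (sub_all lt_F (Hms_lt_mm hh x'C')).
apply: (perm_eq_of_power_sums (F := F) (p := 11) (phi := phi) (d := 9)) => //.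
  by move=> a b /(allP small) a_lt /(allP small) b_lt; apply: nth_enum_inj.
move=> i lt_i9; have /ffunP/(_ (Ordinal lt_i9)) := etrans sx (esym sx').
by rewrite !ffunE.
Qed.
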